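(* Let $\mathrm{K}$ be a semi-symmetric curvature tensor on a finite-dimensional pseudo-Euclidean vector space $(V,\langle\cdot,\cdot\rangle)$ and let $\chi$ be the minimal polynomial (over $\mathbb{R}$) of its Ricci operator $\mathrm{Ric}$. Then: (1) $\chi=\prod_i P_i$ where the $P_i$ are pairwise coprime and each $P_i$ is either irreducible or equal to $X^2$. Write $P_1,\dots,P_r$ for the factors not in $\{X,X^2\}$ (each irreducible and coprime to $X$). (2) $V$ splits as an orthogonal direct sum $V=E_0\oplus E_1\oplus\cdots\oplus E_r$, where $E_0=\ker(\mathrm{Ric}^2)$ and $E_i=\ker(P_i(\mathrm{Ric}))$ for $1\le i\le r$. (3) Each $E_i$ ($0\le i\le r$) is invariant under every $\mathrm{K}(u,v)$, $u,v\in V$. (4) For $i\neq j$, $\mathrm{K}(u,v)=0$ whenever $u\in E_i$, $v\in E_j$. (5) $\dim E_i\ge 2$ for every $1\le i\le r$. (6) $\mathfrak{h}(\mathrm{K})=\mathfrak{h}_0(\mathrm{K})+\mathfrak{h}_1(\mathrm{K})+\cdots+\mathfrak{h}_r(\mathrm{K})$, where $\mathfrak{h}_i(\mathrm{K})$ is the span of $\{\mathrm{K}(x,y): x,y\in E_i\}$, and each $\mathfrak{h}_i(\mathrm{K})$ is a Lie subalgebra.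
   Context: A curvature tensor on a pseudo-Euclidean vector space $(V,\langle\cdot,\cdot\rangle)$ is a bilinear map $\mathrm{K}:V\times V\to \mathfrak{so}(V,\langle\cdot,\cdot\rangle)$ with $\mathrm{K}(u,v)=-\mathrm{K}(v,u)$, $\mathrm{K}(u,v)w+\mathrm{K}(v,w)u+\mathrm{K}(w,u)v=0$, and $\langle \mathrm{K}(a,b)u,v\rangle=\langle \mathrm{K}(u,v)a,b\rangle$. It is semi-symmetric if $[\mathrm{K}(u,v),\mathrm{K}(a,b)]=\mathrm{K}(\mathrm{K}(u,v)a,b)+\mathrm{K}(a,\mathrm{K}(u,v)b)$ for all $u,v,a,b\in V$. $\mathfrak{h}(\mathrm{K})$ denotes the linear span of $\{\mathrm{K}(u,v):u,v\in V\}$ in $\mathfrak{so}(V)$. The Ricci operator $\mathrm{Ric}$ is the symmetric endomorphism with $\langle\mathrm{Ric}(u),v\rangle=\operatorname{trace}(a\mapsto \mathrm{K}(u,a)v)$. *)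

(* Endomorphisms of V are matrices acting on the RIGHT of row vectors:
   the endomorphism F sends w to w *m F.  Hence composition "F after G"
   is the matrix G *m F, and the commutator [F, G] = F o G - G o F is
   the matrix G *m F - F *m G. *)
From HB Require Import structures.
From mathcomp Require Import all_boot all_order all_algebra.
From mathcomp Require Import reals.
Set Implicit Arguments. Unset Strict Implicit. Unset Printing Implicit Defensive.
Import Order.TTheory GRing.Theory Num.Theory.
Local Open Scope ring_scope.

Section Defs.
Variables (R : realType) (n : nat).

Definition ip (G : 'M[R]_n) (u v : 'rV[R]_n) : R := (u *m G *m v^T) 0 0.

Definition pseudo_euclidean (G : 'M[R]_n) : Prop := G^T = G /\ G \in unitmx.

Definition curvature_tensor (G : 'M[R]_n) (K : 'rV[R]_n -> 'rV[R]_n -> 'M[R]_n) : Prop :=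
  [/\ ((forall (a : R) u u' v, K (a *: u + u') v = a *: K u v + K u' v) /\
       (forall (a : R) u v v', K u (a *: v + v') = a *: K u v + K u v')),
      (forall u v w z, ip G (w *m K u v) z + ip G w (z *m K u v) = 0),
      (forall u v, K u v = - K v u),
      (forall u v w, w *m K u v + u *m K v w + v *m K w u = 0) &
      (forall a b u v, ip G (u *m K a b) v = ip G (a *m K u v) b)].

Definition semi_symmetric (K : 'rV[R]_n -> 'rV[R]_n -> 'M[R]_n) : Prop :=
  forall u v a b,
    K a b *m K u v - K u v *m K a b
    = K (a *m K u v) b + K a (b *m K u v).

(* trace of the linear map a |-> K(u,a) v  (sum of diagonal entries of its
   matrix in the standard basis) *)
Definition ricci_form (K : 'rV[R]_n -> 'rV[R]_n -> 'M[R]_n) (u v : 'rV[R]_n) : R :=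
  \sum_(i < n) (v *m K u (delta_mx 0 i)) 0 i.

Definition is_ricci (G : 'M[R]_n) (K : 'rV[R]_n -> 'rV[R]_n -> 'M[R]_n) (Ric : 'M[R]_n) : Prop :=
  forall u v, ip G (u *m Ric) v = ricci_form K u v.

Definition in_span (S : 'M[R]_n -> Prop) (A : 'M[R]_n) : Prop :=
  exists (m : nat) (c : 'I_m -> R) (B : 'I_m -> 'M[R]_n),
    (forall k, S (B k)) /\ A = \sum_(k < m) c k *: B k.

(* h_P(K) = span { K(x,y) : x, y in P };  h(K) is the case P = V *)
Definition hspan (K : 'rV[R]_n -> 'rV[R]_n -> 'M[R]_n) (P : 'rV[R]_n -> Prop) : 'M[R]_n -> Prop :=
  in_span (fun B => exists x y, P x /\ P y /\ B = K x y).

(* Lie subalgebra of gl(V) (a span is automatically a linear subspace) *)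
Definition lie_closed (S : 'M[R]_n -> Prop) : Prop :=
  forall A B, S A -> S B -> S (A *m B - B *m A).

End Defs.

(* E_0 = ker(Ric^2), E_i = ker(P_i(Ric)) for 1 <= i <= r, where Ps = [P_1;...;P_r]
   (as row spaces of matrices; u \in E_i  iff  (u <= Espace Ric Ps i)%MS) *)
Definition Espace (R : realType) (n : nat) (Ric : 'M[R]_n.+1) (Ps : seq {poly R}) (i : nat)
  : 'M[R]_n.+1 :=
  if i is j.+1 then kermx (horner_mx Ric (nth 0 Ps j)) else kermx (Ric ^+ 2).

(* Ric is self-adjoint and, by semi-symmetry, commutes with every K(u,v); the Bianchi
   identity then upgrades this to K(u p(Ric), v) = K(u,v) p(Ric) for every polynomial p.
   Hence if g(Ric) is nilpotent, the Ricci form at u g(Ric) is the trace of a nilpotent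
   matrix, so g(Ric) Ric = 0: the minimal polynomial divides X g as soon as it divides a
   power of g.  This forces all its irreducible factors to be simple, except X, which may
   occur squared.  The E_i are the corresponding primary components of Ric: they are
   orthogonal because Ric is self-adjoint, K-invariant because K(u,v) commutes with Ric,
   and K vanishes across them by the pair symmetry of K. *)

From HB Require Import structures.
From mathcomp Require Import all_boot all_order all_algebra.
From mathcomp Require Import reals.
From mathcomp Require Import zify.
From Stdlib Require Import Classical.
Set Implicit Arguments. Unset Strict Implicit. Unset Printing Implicit Defensive.
Import Order.TTheory GRing.Theory Num.Theory.
Local Open Scope ring_scope.

Lemma mxtrace_nilpotent (F : fieldType) (n : nat) (A : 'M[F]_n.+1) (k : nat) :
  A ^+ k = 0 -> \tr A = 0.
Proof.
move=> Ak0.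
pose B : 'M[{poly F}]_n.+1 := map_mx polyC A.
have Bk0 : B ^+ k = 0 by rewrite /B -rmorphXn /= Ak0 raddf0.
have XB : GRing.comm ('X%:M : 'M[{poly F}]_n.+1) B by rewrite /GRing.comm -!mulmxE scalar_mxC.
have charA_dvd : char_poly A %| 'X ^+ (k * n.+1).
  have -> : 'X ^+ (k * n.+1) = \det (('X : {poly F})%:M ^+ k : 'M_n.+1).
    by rewrite -rmorphXn det_scalar exprM.
  have := subrXX_comm k XB; rewrite Bk0 subr0 => ->.
  by rewrite -mulmxE det_mulmx dvdp_mulr.
have : char_poly A %| ('X - 0%:P) ^+ (k * n.+1) by rewrite subr0.
case/dvdp_exp_XsubCP => j _; rewrite subr0.
rewrite eqp_monic ?char_poly_monic ?monicXn // => /eqP charA.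
have jE : j = n.+1 by have := size_char_poly A; rewrite charA size_polyXn => -[].
have := char_poly_trace A isT; rewrite charA jE coefXn eqn_leq ltnn andbF.
by move/esym/eqP; rewrite oppr_eq0 => /eqP.
Qed.

Lemma kermxpoly_neq0 (F : fieldType) (n : nat) (A : 'M[F]_n.+1) (p : {poly F}) :
  (1 < size p)%N -> p %| mxminpoly A -> kermxpoly A p != 0.
Proof.
move=> p_gt1 pA; rewrite kermx_eq0 row_free_unit; apply/negP => p_unit.
have mA_neq0 : mxminpoly A != 0 by apply: monic_neq0 (mxminpoly_monic A).
have Ap := divpK pA.
have q_neq0 : mxminpoly A %/ p != 0 by apply: contraNneq mA_neq0 => q0; rewrite -Ap q0 mul0r.
have : horner_mx A (mxminpoly A %/ p) = 0.
  have := mx_root_minpoly A; rewrite -{1}Ap rmorphM /= -mulmxE.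
  by move/(congr1 (mulmx^~ (invmx (horner_mx A p)))); rewrite -mulmxA mulmxV // mulmx1 mul0mx.
have p_neq0 : p != 0 by rewrite -size_poly_gt0 ltnW.
move/mxminpoly_min/(dvdp_leq q_neq0); rewrite size_divp //.
have : (0 < size (mxminpoly A))%N by rewrite size_poly_gt0.
by move: (size _) (size p) p_gt1 => a b; lia.
Qed.

Section Factorization.
Variable F : fieldType.
Implicit Types p q r m g : {poly F}.

Lemma irredp_eqp p q : p %= q -> irreducible_poly q -> irreducible_poly p.
Proof.
move=> pq [q_gt1 q_irr]; split=> [|d d_neq1 dp]; first by rewrite (eqp_size pq).
rewrite (eqp_dvdr _ pq) in dp.
by rewrite (eqp_ltrans (q_irr d d_neq1 dp)) // eqp_sym.
Qed.

Lemma irredp_X : irreducible_poly ('X : {poly F}).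
Proof. by rewrite -[X in irreducible_poly X]subr0; apply: irredp_XsubC. Qed.

Lemma irredp_dvdX q : irreducible_poly q -> q \is monic -> q %| 'X -> q = 'X.
Proof.
move=> [q_gt1 _] q_monic /(irredp_XsubCP irredp_X) [q1|qX].
  by move: q_gt1; rewrite (eqp_size q1) size_poly1.
by apply/eqP; rewrite -eqp_monic ?monicX.
Qed.

Lemma exists_monic_irredp_dvdp p : (1 < size p)%N ->
  exists q, [/\ irreducible_poly q, q \is monic & q %| p].
Proof.
have [N] := ubnP (size p); elim: N p => // N IH p; rewrite ltnS => p_le p_gt1.
have p_neq0 : p != 0 by rewrite -size_poly_gt0 (ltn_trans _ p_gt1).
have [p_irr|p_red] := classic (irreducible_poly p).
  have lp_neq0 : lead_coef p != 0 by rewrite lead_coef_eq0.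
  have pE : (lead_coef p)^-1 *: p %= p by rewrite eqp_scale ?invr_eq0.
  exists ((lead_coef p)^-1 *: p); split; first exact: irredp_eqp p_irr.
    by apply/monicP; rewrite lead_coefZ mulVf.
  by rewrite (eqp_dvdl _ pE).
have [d] : exists d : {poly F}, ~ (size d != 1 -> d %| p -> d %= p).
  by apply: not_all_ex_not => p_irr; apply: p_red; split.
move=> dNp; have [d_neq1 {}dNp] := imply_to_and _ _ dNp.
have [dp /negP {}dNp] := imply_to_and _ _ dNp.
have d_gt1 : (1 < size d)%N.
  rewrite ltn_neqAle eq_sym d_neq1 size_poly_gt0.
  by apply: contraNneq p_neq0 => d0; move: dp; rewrite d0 dvd0p.
have d_lt : (size d < size p)%N.
  by rewrite ltn_neqAle dvdp_leq // andbT (dvdp_size_eqp dp).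
have [q [q_irr q_monic qd]] := IH d (leq_trans d_lt p_le) d_gt1.
by exists q; split=> //; apply: dvdp_trans qd dp.
Qed.

Lemma dvdp_prod_mem (s : seq {poly F}) p : p \in s -> p %| \prod_(x <- s) x.
Proof. by move=> ps; rewrite (big_rem _ ps) /= dvdp_mulIl. Qed.

Lemma dvdp_prod_exp (s : seq {poly F}) g :
  (forall p, p \in s -> p %| g) -> \prod_(p <- s) p %| g ^+ size s.
Proof.
elim: s => [|p s IH] sg; first by rewrite big_nil expr0.
rewrite big_cons exprS dvdp_mul ?sg ?mem_head // IH // => q qs.
by apply: sg; rewrite inE qs orbT.
Qed.

Lemma poly_multiplicity q p : (1 < size q)%N -> p != 0 ->
  exists k r, p = q ^+ k * r /\ ~~ (q %| r).
Proof.
move=> q_gt1; have [N] := ubnP (size p); elim: N p => // N IH p.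
rewrite ltnS => p_le p_neq0.
have [qp|qNp] := boolP (q %| p); last by exists 0%N, p; rewrite mul1r.
have pE := divpK qp.
have pq_neq0 : p %/ q != 0 by apply: contraNneq p_neq0 => pq0; rewrite -pE pq0 mul0r.
have pq_lt : (size (p %/ q)%R < N)%N.
  apply: leq_trans p_le; rewrite size_divp -?size_poly_gt0 ?(ltn_trans _ q_gt1) //.
  by rewrite ltn_subrL size_poly_gt0 p_neq0 andbT -subn1 subn_gt0.
have [k [r [pqE qNr]]] := IH _ pq_lt pq_neq0.
by exists k.+1, r; rewrite -{1}pE pqE exprSr mulrAC.
Qed.

(* Equivalently: every irreducible factor of [m] is simple, except that ['X] may occur squared. *)
Definition almost_squarefree m := forall g k, m %| g ^+ k -> m %| 'X * g.

Lemma almost_squarefree_exponent q k r :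
    irreducible_poly q -> q \is monic -> ~~ (q %| r) -> (0 < k)%N ->
  almost_squarefree (q ^+ k * r) -> k = 1%N \/ (q = 'X /\ k = 2%N).
Proof.
move=> q_irr q_monic qNr k_gt0 sqf.
have q_neq0 : q != 0 by apply: monic_neq0.
have r_neq0 : r != 0 by apply: contraNneq qNr => ->; rewrite dvdp0.
have : q ^+ k * r %| 'X * (q * r).
  apply: (sqf _ k); rewrite exprMn dvdp_mul2l ?expf_neq0 //.
  by rewrite -(prednK k_gt0) exprS dvdp_mulIl.
rewrite mulrA dvdp_mul2r //; clear sqf; case: k k_gt0 => // -[|k] _; first by left.
rewrite exprS mulrC dvdp_mul2r // => qkX; right.
have qX : q = 'X.
  by apply: irredp_dvdX => //; apply: dvdp_trans qkX; rewrite exprS dvdp_mulIl.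
split=> //; move: qkX; rewrite qX -{2}['X]expr1 dvdp_Pexp2l ?size_polyX //.
by case: k.
Qed.

Lemma almost_squarefree_coprime q r :
  coprimep q r -> almost_squarefree (q * r) -> almost_squarefree r.
Proof.
move=> qr sqf g j rg.
have : q * r %| (q * g) ^+ j.+1.
  rewrite exprMn Gauss_dvdp //; apply/andP; split.
    by rewrite dvdp_mulr // exprS dvdp_mulIl.
  by rewrite dvdp_mull // (dvdp_trans rg) // dvdp_exp2l.
move/sqf; rewrite mulrCA => /(dvdp_trans (dvdp_mulIr q r)).
by rewrite Gauss_dvdpr // coprimep_sym.
Qed.

Lemma almost_squarefree_factorization m : m \is monic -> almost_squarefree m ->
  exists s : seq {poly F},
    [/\ m = \prod_(p <- s) p, all (fun p => p \is monic) s,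
        pairwise (@coprimep F) s & forall p, p \in s -> irreducible_poly p \/ p = 'X^2].
Proof.
have [N] := ubnP (size m); elim: N m => // N IH m; rewrite ltnS => m_le m_monic sqf.
have m_neq0 : m != 0 by apply: monic_neq0.
have [m_le1|m_gt1] := leqP (size m) 1.
  exists [::]; rewrite big_nil; split=> //.
  apply/eqP; rewrite -(eqp_monic m_monic (monic1 F)) -size_poly_eq1 eqn_leq m_le1.
  by rewrite size_poly_gt0.
have [q [q_irr q_monic qm]] := exists_monic_irredp_dvdp m_gt1.
have q_gt1 : (1 < size q)%N by case: q_irr.
have [k [r [mE qNr]]] := poly_multiplicity q_gt1 m_neq0.
have r_neq0 : r != 0 by apply: contraNneq m_neq0 => r0; rewrite mE r0 mulr0.
have k_gt0 : (0 < k)%N by case: k mE => // mE; move: qm; rewrite mE mul1r (negPf qNr).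
have r_monic : r \is monic by rewrite -(monicMl _ (monic_exp k q_monic)) -mE.
have qkr : coprimep (q ^+ k) r.
  by apply: coprimep_expl; rewrite irreducible_poly_coprime.
rewrite mE in sqf.
have r_lt : (size r < N)%N.
  apply: leq_trans m_le; rewrite mE size_mul ?expf_neq0 ?monic_neq0 //.
  have := size_exp q k; have := size_poly_gt0 r; rewrite r_neq0.
  move: (size q) (size r) (size (q ^+ k)) q_gt1 k_gt0 => a b c; nia.
have [s [rE s_monic s_coprime s_irr]] :=
  IH r r_lt r_monic (almost_squarefree_coprime qkr sqf).
exists (q ^+ k :: s); split.
- by rewrite big_cons -rE.
- by rewrite /= monic_exp.
- rewrite pairwise_cons s_coprime andbT; apply/allP => p ps.
  by apply: coprimep_dvdl qkr; rewrite rE dvdp_prod_mem.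
- move=> p; rewrite inE => /predU1P [->|/s_irr //].
  have [->|[-> ->]] := almost_squarefree_exponent q_irr q_monic qNr k_gt0 sqf.
    by left; rewrite expr1.
  by right.
Qed.

Lemma pairwise_coprimep_nth (s : seq {poly F}) :
  pairwise (@coprimep F) s -> forall i j, (i < size s)%N -> (j < size s)%N -> i <> j ->
  coprimep (nth 0 s i) (nth 0 s j).
Proof.
move/(pairwiseP 0) => s_coprime i j si sj /eqP; case: ltngtP => // [ij|ji] _.
  exact: s_coprime.
by rewrite coprimep_sym; apply: s_coprime.
Qed.

End Factorization.

Section Span.
Variables (R : realType) (n : nat).
Implicit Types (S : 'M[R]_n -> Prop) (A : 'M[R]_n).

Lemma in_span0 S : in_span S 0.
Proof. by exists 0%N, (fun=> 0), (fun=> 0); split=> [[]|]; rewrite ?big_ord0. Qed.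

Lemma in_span_mem S A : S A -> in_span S A.
Proof. by move=> SA; exists 1%N, (fun=> 1), (fun=> A); rewrite big_ord1 scale1r. Qed.

Lemma in_spanZ S a A : in_span S A -> in_span S (a *: A).
Proof.
move=> [m [c [B [SB ->]]]]; exists m, (fun k => a * c k), B; split=> //.
by rewrite scaler_sumr; apply: eq_bigr => k _; rewrite scalerA.
Qed.

Lemma in_spanD S A B : in_span S A -> in_span S B -> in_span S (A + B).
Proof.
move=> [m1 [c1 [B1 [SB1 ->]]]] [m2 [c2 [B2 [SB2 ->]]]].
exists (m1 + m2)%N, (fun k => match split k with inl a => c1 a | inr b => c2 b end),
  (fun k => match split k with inl a => B1 a | inr b => B2 b end).
split; first by move=> k; case: (split k).
by rewrite big_split_ord; congr (_ + _); apply: eq_bigr => i _;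
  [rewrite (unsplitK (inl i)) | rewrite (unsplitK (inr i))].
Qed.

Lemma in_span_sum S (I : Type) (r : seq I) (P : pred I) (F : I -> 'M[R]_n) :
  (forall i, P i -> in_span S (F i)) -> in_span S (\sum_(i <- r | P i) F i).
Proof. by move=> SF; apply: big_ind => //; [apply: in_span0 | apply: in_spanD]. Qed.

Lemma in_span_sub S S' A : (forall B, S B -> S' B) -> in_span S A -> in_span S' A.
Proof. by move=> SS' [m [c [B [SB ->]]]]; exists m, c, B; split=> // k; apply: SS'. Qed.

Lemma in_span_linear S S' (f : {linear 'M[R]_n -> 'M[R]_n}) :
  (forall A, S A -> in_span S' (f A)) -> forall A, in_span S A -> in_span S' (f A).
Proof.
move=> Sf _ [m [c [B [SB ->]]]]; rewrite linear_sum.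
by apply: in_span_sum => k _; rewrite linearZ; apply/in_spanZ/Sf.
Qed.

Lemma lie_closed_span S :
  (forall A B, S A -> S B -> in_span S (A *m B - B *m A)) -> lie_closed (in_span S).
Proof.
move=> SS A B SA SB; apply: (in_span_linear (f := mulmx A \- mulmxr A) _ SB) => {}B {}SB.
by apply: (in_span_linear (f := mulmxr B \- mulmx B) _ SA) => {}A {}SA; apply: SS.
Qed.

End Span.

Lemma row_dot_eq (F : ringType) (m : nat) (x y : 'rV[F]_m) :
  (forall b : 'rV[F]_m, (x *m b^T) 0 0 = (y *m b^T) 0 0) -> x = y.
Proof.
move=> xy; apply/rowP => j.
by have := xy (delta_mx 0 j); rewrite trmx_delta -!colE !mxE.
Qed.

Section Selfadjoint.
Variables (R : realType) (n : nat) (G : 'M[R]_n.+1).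
Local Notation V := 'rV[R]_n.+1.
Local Notation M := 'M[R]_n.+1.

Definition selfadjoint (X : M) := X *m G = G *m X^T.

Lemma selfadjoint_ip X : selfadjoint X -> forall x y, ip G (x *m X) y = ip G x (y *m X).
Proof. by move=> XG x y; rewrite /ip trmx_mul !mulmxA -(mulmxA x X G) XG !mulmxA. Qed.

Lemma selfadjoint_horner X p : selfadjoint X -> selfadjoint (horner_mx X p).
Proof.
move=> XG; elim/poly_ind: p => [|p c IH].
  by rewrite /selfadjoint rmorph0 mul0mx trmx0 mulmx0.
rewrite /selfadjoint rmorphD rmorphM /= horner_mx_X horner_mx_C -mulmxE.
rewrite mulmxDl linearD /= mulmxDr -mulmxA XG mulmxA IH -mulmxA -trmx_mul.
by rewrite (comm_mx_horner _ (comm_mx_refl X)) tr_scalar_mx scalar_mxC.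
Qed.

Lemma kermxpoly_orthogonal X p q u v : selfadjoint X -> coprimep p q ->
  (u <= kermxpoly X p)%MS -> (v <= kermxpoly X q)%MS -> ip G u v = 0.
Proof.
move=> XG /Bezout_eq1_coprimepP [[a b] /= pq] /sub_kermxP up /sub_kermxP vq.
have -> : u = u *m horner_mx X (b * q).
  have X1 : horner_mx X (a * p + b * q) = 1%:M by rewrite pq rmorph1.
  rewrite -{1}[u]mulmx1 -X1 rmorphD mulmxDr [a * _]mulrC !rmorphM /=.
  by rewrite -!mulmxE [in X in X + _]mulmxA up mul0mx add0r.
rewrite rmorphM /= -mulmxE mulmxA (selfadjoint_ip (selfadjoint_horner _ XG)).
by rewrite vq /ip trmx0 mulmx0 mxE.
Qed.

Hypothesis HG : pseudo_euclidean G.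

Lemma ip_sym u v : ip G u v = ip G v u.
Proof.
case: HG => GT _; rewrite /ip.
have -> : (u *m G *m v^T) 0 0 = (u *m G *m v^T)^T 0 0 by rewrite [RHS]mxE.
by rewrite !trmx_mul trmxK GT mulmxA.
Qed.

Lemma ip_row_eq (x y : V) : (forall b, ip G x b = ip G y b) -> x = y.
Proof.
case: HG => _ Gunit xy; have : x *m G = y *m G by apply: row_dot_eq; exact: xy.
by move/(congr1 (mulmx^~ (invmx G))); rewrite -!mulmxA mulmxV // !mulmx1.
Qed.

Lemma ip_mx_eq (X Y : M) : (forall a b, ip G (a *m X) b = ip G (a *m Y) b) -> X = Y.
Proof. by move=> XY; apply/eqP/mulmxP => a; apply: ip_row_eq; apply: XY. Qed.

End Selfadjoint.

Lemma eqNv (F : numFieldType) (V : lmodType F) (v : V) : (- v == v) = (v == 0).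
Proof.
apply/eqP/eqP => [Nv|->]; last by rewrite oppr0.
have : v *+ 2 == 0 by rewrite mulr2n -{1}Nv addNr.
by rewrite -scaler_nat scaler_eq0 pnatr_eq0 => /eqP.
Qed.

Section Curvature.
Variables (R : realType) (n : nat) (G : 'M[R]_n.+1).
Local Notation V := 'rV[R]_n.+1.
Local Notation M := 'M[R]_n.+1.
Variable K : V -> V -> M.
Hypotheses (HG : pseudo_euclidean G) (HK : curvature_tensor G K).

Lemma curvature_antisym u v : K u v = - K v u.
Proof. by case: HK. Qed.

Lemma curvature_bianchi u v w : w *m K u v + u *m K v w + v *m K w u = 0.
Proof. by case: HK. Qed.

Lemma curvature_pair a b u v : ip G (u *m K a b) v = ip G (a *m K u v) b.
Proof. by case: HK. Qed.

Lemma curvature_skew u v : K u v *m G = - (G *m (K u v)^T).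
Proof.
apply/eqP/mulmxP => a; apply: row_dot_eq => b.
case: HK => _ /(_ u v a b) /eqP + _ _ _; rewrite addr_eq0 /ip trmx_mul !mulmxA.
by rewrite mulmxN mulNmx mulmxA => /eqP ->; rewrite [RHS]mxE.
Qed.

Lemma curvature_ip_skew u v w z : ip G w (z *m K u v) = - ip G (w *m K u v) z.
Proof. by case: HK => _ /(_ u v w z) /eqP; rewrite addrC addr_eq0 => /eqP. Qed.

Lemma curvatureDZr a u v v' : K u (a *: v + v') = a *: K u v + K u v'.
Proof. by case: HK => -[_ ->]. Qed.

Lemma curvature0r u : K u 0 = 0.
Proof.
have := curvatureDZr 1 u 0 0; rewrite scaler0 add0r scale1r -{1}[K u 0]add0r.
by move/addIr.
Qed.

Lemma curvatureDr u v v' : K u (v + v') = K u v + K u v'.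
Proof. by have := curvatureDZr 1 u v v'; rewrite !scale1r. Qed.

Lemma curvatureZr a u v : K u (a *: v) = a *: K u v.
Proof. by rewrite -[a *: v]addr0 curvatureDZr curvature0r addr0. Qed.

Lemma curvatureDl u u' v : K (u + u') v = K u v + K u' v.
Proof. by rewrite curvature_antisym curvatureDr opprD -!curvature_antisym. Qed.

Lemma curvature0l v : K 0 v = 0.
Proof. by rewrite curvature_antisym curvature0r oppr0. Qed.

Lemma curvature_sumr (I : Type) (r : seq I) (P : pred I) u (F : I -> V) :
  K u (\sum_(i <- r | P i) F i) = \sum_(i <- r | P i) K u (F i).
Proof. exact: (big_morph (K u) (curvatureDr u) (curvature0r u)). Qed.

Lemma curvature_suml (I : Type) (r : seq I) (P : pred I) v (F : I -> V) :
  K (\sum_(i <- r | P i) F i) v = \sum_(i <- r | P i) K (F i) v.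
Proof. exact: (big_morph (K^~ v) (fun a b => curvatureDl a b v) (curvature0l v)). Qed.

Lemma curvature_alternate u : K u u = 0.
Proof. by apply/eqP; rewrite -eqNv -curvature_antisym. Qed.

Lemma mxtrace_curvature u v : \tr (K u v) = 0.
Proof.
case: HG => GT Gunit.
have KE : K u v = - (G *m (K u v)^T *m invmx G).
  by rewrite -mulNmx -curvature_skew -mulmxA mulmxV // mulmx1.
have : - \tr (K u v) = \tr (K u v).
  by rewrite {2}KE linearN /= mxtrace_mulC mulmxA mulVmx // mul1mx mxtrace_tr.
by move/eqP; rewrite eqNr => /eqP.
Qed.

Definition ricci_map (x y : V) : M := \matrix_(i, j) (y *m K x (delta_mx 0 i)) 0 j.

Lemma ricci_mapE a x y : a *m ricci_map x y = y *m K x a.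
Proof.
rewrite {2}(row_sum_delta a) curvature_sumr mulmx_sumr {1}(row_sum_delta a) mulmx_suml.
apply: eq_bigr => j _; rewrite -scalemxAl curvatureZr -scalemxAr; congr (_ *: _).
by apply/rowP => k; rewrite -rowE !mxE.
Qed.

Lemma mxtrace_ricci_map_sym x y : \tr (ricci_map x y) = \tr (ricci_map y x).
Proof.
have bianchi : ricci_map x y = ricci_map y x - K y x.
  apply/eqP/mulmxP => a; rewrite mulmxBr !ricci_mapE.
  have /eqP := curvature_bianchi x a y.
  by rewrite (curvature_antisym a y) mulmxN addrAC subr_eq0 => /eqP <-; rewrite addrK.
by rewrite bianchi linearB /= mxtrace_curvature subr0.
Qed.

Section CommutingSelfadjoint.
Variable X : M.
Hypotheses (XG : selfadjoint G X) (XK : forall u v, K u v *m X = X *m K u v).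

Lemma curvature_mull_swap u v : K (u *m X) v = K u (v *m X).
Proof.
apply: (ip_mx_eq HG) => a b.
by rewrite -curvature_pair -mulmxA -XK mulmxA selfadjoint_ip // curvature_pair.
Qed.

(* By the Bianchi identity the defect [L] changes sign under a cyclic shift of its
   arguments; three shifts give back [L], so [L = - L]. *)
Lemma curvature_mull u v : K (u *m X) v = K u v *m X.
Proof.
pose L (x y z : V) := z *m K (x *m X) y - z *m K x y *m X.
have Lshift x y z : L x y z = - L z x y.
  apply/eqP; rewrite -addr_eq0; apply/eqP.
  have /eqP := curvature_bianchi (x *m X) y z.
  rewrite addrAC addr_eq0 => /eqP bianchi.
  have /eqP := congr1 (mulmx^~ X) (curvature_bianchi x y z).
  rewrite mul0mx !mulmxDl -!mulmxA (XK y z) !mulmxA addrAC addr_eq0 => /eqP bianchiX.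
  by rewrite /L (curvature_mull_swap z x) addrACA -opprD bianchi bianchiX subrr.
apply/eqP/mulmxP => z; rewrite mulmxA; apply/eqP; rewrite -subr_eq0 -/(L u v z).
clearbody L; rewrite -eqNv; apply/eqP.
by rewrite {1}Lshift Lshift Lshift !opprK.
Qed.

Lemma ricci_map_mull x y : ricci_map (x *m X) y = ricci_map x y *m X.
Proof. by apply/eqP/mulmxP => a; rewrite mulmxA !ricci_mapE curvature_mull mulmxA. Qed.

Lemma ricci_map_comm x y : X *m ricci_map x y = ricci_map x y *m X.
Proof.
apply/eqP/mulmxP => a; rewrite !mulmxA !ricci_mapE curvature_antisym curvature_mull.
by rewrite (curvature_antisym a x) mulNmx opprK mulmxA.
Qed.

Lemma mxtrace_ricci_map_nilpotent k x y : X ^+ k = 0 -> \tr (ricci_map (x *m X) y) = 0.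
Proof.
move=> Xk0; rewrite ricci_map_mull; apply: (mxtrace_nilpotent (k := k)).
by rewrite mulmxE exprMn_comm ?Xk0 ?mulr0 // /GRing.comm -!mulmxE ricci_map_comm.
Qed.

End CommutingSelfadjoint.
End Curvature.

Section Ricci.
Variables (R : realType) (n : nat) (G : 'M[R]_n.+1).
Local Notation V := 'rV[R]_n.+1.
Local Notation M := 'M[R]_n.+1.
Variables (K : V -> V -> M) (Q : M).
Hypotheses (HG : pseudo_euclidean G) (HK : curvature_tensor G K)
  (HS : semi_symmetric K) (HQ : is_ricci G K Q).

Lemma ricci_ip x y : ip G (x *m Q) y = \tr (ricci_map K x y).
Proof. by rewrite HQ /ricci_form /mxtrace; apply: eq_bigr => i _; rewrite [RHS]mxE. Qed.

Lemma selfadjoint_ricci : selfadjoint G Q.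
Proof.
apply/eqP/mulmxP => a; apply: row_dot_eq => b.
rewrite !mulmxA -/(ip G (a *m Q) b) ricci_ip (mxtrace_ricci_map_sym HG HK) -ricci_ip.
by rewrite ip_sym // /ip trmx_mul !mulmxA.
Qed.

Lemma ricci_map_derivation u v x y :
  ricci_map K (x *m K u v) y + ricci_map K x (y *m K u v)
  = ricci_map K x y *m K u v - K u v *m ricci_map K x y.
Proof.
apply/eqP/mulmxP => a; rewrite !mulmxDr mulmxN !mulmxA !(ricci_mapE HK).
have -> : K (x *m K u v) a = K x a *m K u v - K u v *m K x a - K x (a *m K u v).
  by rewrite HS addrK.
by rewrite !mulmxDr !mulmxN !mulmxA addrAC subrK.
Qed.

(* Semi-symmetry makes [K u v] act as a derivation on [ricci_map]; taking traces kills the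
   commutator term and leaves the skew-adjointness of [K u v] against [Ric]. *)
Lemma ricci_commK u v : K u v *m Q = Q *m K u v.
Proof.
apply: (ip_mx_eq HG) => x y.
have := congr1 mxtrace (ricci_map_derivation u v x y).
rewrite linearD linearB /= mxtrace_mulC subrr -!ricci_ip => /eqP; rewrite addr_eq0.
by rewrite !mulmxA => /eqP ->; rewrite (curvature_ip_skew HK) opprK.
Qed.

Lemma horner_ricci_commK p u v : K u v *m horner_mx Q p = horner_mx Q p *m K u v.
Proof. exact: comm_mx_horner (ricci_commK u v). Qed.

Lemma mulmx_ricci_nilpotent X k : selfadjoint G X ->
  (forall u v, K u v *m X = X *m K u v) -> X ^+ k = 0 -> X *m Q = 0.
Proof.
move=> XG XK Xk0; apply: (ip_mx_eq HG) => x y.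
rewrite mulmx0 mulmxA ricci_ip (mxtrace_ricci_map_nilpotent HG HK XG XK _ _ Xk0).
by rewrite /ip !mul0mx mxE.
Qed.

Lemma almost_squarefree_ricci : almost_squarefree (mxminpoly Q).
Proof.
move=> g k /mxminpoly_minP; rewrite rmorphXn /= => gk0.
apply: mxminpoly_min; rewrite rmorphM /= horner_mx_X -mulmxE.
rewrite (comm_mx_horner _ (comm_mx_refl Q)).
apply: (mulmx_ricci_nilpotent _ _ gk0); first exact: selfadjoint_horner selfadjoint_ricci.
exact: horner_ricci_commK.
Qed.

Lemma ricci_eq0 u : (forall y, K u y = 0) -> u *m Q = 0.
Proof.
move=> Ku0; apply: (ip_row_eq HG) => b; rewrite ricci_ip.
have -> : ricci_map K u b = 0 by apply/eqP/mulmxP => a; rewrite (ricci_mapE HK) Ku0 !mulmx0.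
by rewrite mxtrace0 /ip !mul0mx mxE.
Qed.

Lemma kermxpoly_ricci_stable p u v (w : V) :
  (w <= kermxpoly Q p)%MS -> (w *m K u v <= kermxpoly Q p)%MS.
Proof.
move=> /sub_kermxP wp; apply/sub_kermxP.
by rewrite -mulmxA horner_ricci_commK mulmxA wp mul0mx.
Qed.

Lemma curvature_kermxpoly_coprime p q (u v : V) : coprimep p q ->
  (u <= kermxpoly Q p)%MS -> (v <= kermxpoly Q q)%MS -> K u v = 0.
Proof.
move=> pq up vq; apply: (ip_mx_eq HG) => a b.
rewrite -(curvature_pair HK).
rewrite (kermxpoly_orthogonal selfadjoint_ricci pq (kermxpoly_ricci_stable a b up) vq).
by rewrite mulmx0 /ip !mul0mx mxE.
Qed.

End Ricci.

Definition Epoly (F : fieldType) (Ps : seq {poly F}) (i : nat) : {poly F} :=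
  if i is j.+1 then nth 0 Ps j else 'X^2.

Lemma EspaceE (R : realType) (n : nat) (Q : 'M[R]_n.+1) Ps i :
  Espace Q Ps i = kermxpoly Q (Epoly Ps i).
Proof. by case: i => //; rewrite /kermxpoly rmorphXn /= horner_mx_X. Qed.

Section FactorList.
Variables (F : fieldType) (s : seq {poly F}).
Hypotheses (s_monic : all (fun p => p \is monic) s) (s_coprime : pairwise (@coprimep F) s)
  (s_irr : forall p, p \in s -> irreducible_poly p \/ p = 'X^2).
Local Notation Ps := [seq p <- s | (p != 'X) && (p != 'X^2)].

Lemma mem_factor_filter p : p \in Ps -> [/\ p \in s, irreducible_poly p & coprimep p 'X].
Proof.
rewrite mem_filter => /andP [/andP [pNX pNX2] ps].
have p_irr : irreducible_poly p by case: (s_irr ps) => // pX2; rewrite pX2 eqxx in pNX2.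
split=> //; rewrite irreducible_poly_coprime //; apply: contra pNX => /irredp_dvdX -> //.
exact: (allP s_monic).
Qed.

Lemma Epoly_coprime i j : (i <= size Ps)%N -> (j <= size Ps)%N -> i <> j ->
  coprimep (Epoly Ps i) (Epoly Ps j).
Proof.
have coprimeX2 k : (k < size Ps)%N -> coprimep (nth 0 Ps k) 'X^2.
  by move/(mem_nth 0)/mem_factor_filter => [_ _ ?]; apply: coprimep_expr.
case: i j => [|i] [|j] //= ip jp ij; first by rewrite coprimep_sym; apply: coprimeX2.
  exact: coprimeX2.
apply: pairwise_coprimep_nth => //; first exact: pairwise_filter.
by move=> eq_ij; apply: ij; rewrite eq_ij.
Qed.

Lemma dvdp_prod_factor_Epoly : almost_squarefree (\prod_(p <- s) p) ->
  \prod_(p <- s) p %| \prod_(i < (size Ps).+1) Epoly Ps i.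
Proof.
move=> sqf; have -> : \prod_(i < (size Ps).+1) Epoly Ps i = 'X * ('X * \prod_(p <- Ps) p).
  by rewrite big_ord_recl /= (big_nth 0) big_mkord mulrA.
apply: (sqf _ (2 * size s)%N); rewrite exprM; apply: dvdp_prod_exp => p ps.
have [pPs|] := boolP (p \in Ps); first by rewrite expr2 dvdp_mulr // dvdp_mull // dvdp_prod_mem.
rewrite mem_filter ps andbT negb_and !negbK => /orP [] /eqP ->; rewrite exprMn dvdp_mulr //.
by rewrite expr2 dvdp_mulr.
Qed.

End FactorList.

Section Decomposition.
Variables (R : realType) (n : nat) (G : 'M[R]_n.+1).
Local Notation V := 'rV[R]_n.+1.
Local Notation M := 'M[R]_n.+1.
Variables (K : V -> V -> M) (Q : M).
Hypotheses (HG : pseudo_euclidean G) (HK : curvature_tensor G K)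
  (HS : semi_symmetric K) (HQ : is_ricci G K Q).
Variable s : seq {poly R}.
Hypotheses (s_prod : mxminpoly Q = \prod_(p <- s) p)
  (s_monic : all (fun p => p \is monic) s) (s_coprime : pairwise (@coprimep R) s)
  (s_irr : forall p, p \in s -> irreducible_poly p \/ p = 'X^2).
Local Notation Ps := [seq p <- s | (p != 'X) && (p != 'X^2)].
Local Notation r := (size Ps).
Local Notation E := (Espace Q Ps).

Let Epoly_coprime_ord (i j : 'I_r.+1) : j != i -> coprimep (Epoly Ps i) (Epoly Ps j).
Proof.
move=> ji; apply: Epoly_coprime; rewrite -1?ltnS ?ltn_ord //.
by move/val_inj => ij; rewrite ij eqxx in ji.
Qed.

Lemma Espace_sum : (\sum_(i < r.+1) E i :=: 1%:M)%MS.
Proof.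
under eq_bigr do rewrite EspaceE.
apply: eqmx_trans (eqmx_sym (kermxpoly_prod _ _)) _.
  by move=> i j _ _; apply: Epoly_coprime_ord.
apply: kermxpoly_min; rewrite s_prod dvdp_prod_factor_Epoly // -s_prod.
exact: almost_squarefree_ricci HG HK HS HQ.
Qed.

Lemma Espace_direct : mxdirect (\sum_(i < r.+1) E i).
Proof.
have /mxdirect_sumsP direct := @mxdirect_sum_kermx _ _ Q _ predT
  (fun i : 'I_r.+1 => Epoly Ps i) (fun i j _ _ => @Epoly_coprime_ord i j).
apply/mxdirect_sumsP => i _.
rewrite EspaceE (eq_bigr (fun j : 'I_r.+1 => kermxpoly Q (Epoly Ps j))) => [|j _].
  exact: direct.
by rewrite EspaceE.
Qed.

Lemma Espace_decomposition (y : V) : exists f : 'I_r.+1 -> V,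
  y = \sum_(i < r.+1) f i /\ forall i : 'I_r.+1, (f i <= E i)%MS.
Proof.
have : (y <= \sum_(i < r.+1) E i)%MS by rewrite Espace_sum submx1.
by case/sub_sumsmxP => u yE; exists (fun i => u i *m E i); split=> // i; apply: submxMl.
Qed.

Lemma Espace_orthogonal i j (u v : V) : (i <= r)%N -> (j <= r)%N -> i <> j ->
  (u <= E i)%MS -> (v <= E j)%MS -> ip G u v = 0.
Proof.
move=> ir jr ij; rewrite !EspaceE; apply: kermxpoly_orthogonal (selfadjoint_ricci HG HK HQ) _.
exact: Epoly_coprime.
Qed.

Lemma Espace_stable i (u v w : V) : (w <= E i)%MS -> (w *m K u v <= E i)%MS.
Proof. by rewrite !EspaceE; apply: (kermxpoly_ricci_stable HG HK HS HQ). Qed.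

Lemma curvature_Espace i j (u v : V) : (i <= r)%N -> (j <= r)%N -> i <> j ->
  (u <= E i)%MS -> (v <= E j)%MS -> K u v = 0.
Proof.
move=> ir jr ij; rewrite !EspaceE; apply: (curvature_kermxpoly_coprime HG HK HS HQ).
exact: Epoly_coprime.
Qed.

Lemma curvature_Espace_split (x y : V) : exists f g : 'I_r.+1 -> V,
  [/\ forall i, (f i <= E i)%MS, forall i, (g i <= E i)%MS & K x y = \sum_i K (f i) (g i)].
Proof.
have [f [-> fE]] := Espace_decomposition x; have [g [-> gE]] := Espace_decomposition y.
exists f, g; split=> //; rewrite (curvature_suml HK); apply: eq_bigr => i _.
rewrite (curvature_sumr HK) (bigD1 i) //= big1 ?addr0 // => j ji.
apply: (curvature_Espace (ltn_ord i) (ltn_ord j) _ (fE i) (gE j)).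
by move=> ij; move: ji; rewrite -val_eqE /= ij eqxx.
Qed.

Lemma curvature_Espace_row i (u : V) : (i <= r)%N -> (u <= E i)%MS ->
  (forall v, (v <= E i)%MS -> K u v = 0) -> forall y, K u y = 0.
Proof.
move=> ir uE Ku0 y; have [f [-> fE]] := Espace_decomposition y.
rewrite (curvature_sumr HK) big1 // => j _.
have [ji|ji] := eqVneq (j : nat) i; first by apply: Ku0; rewrite -ji fE.
by apply: (curvature_Espace ir (ltn_ord j) _ uE (fE j)) => ij; rewrite ij eqxx in ji.
Qed.

(* A line [E i] spanned by [u] would give [K u _ = 0], hence [u Ric = 0], whereas
   [P_i] is coprime to ['X]. *)
Lemma rank_Espace i : (1 <= i <= r)%N -> (2 <= \rank (E i))%N.
Proof.
case: i => // i /andP [_ ir].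
have [ps p_irr pX] := mem_factor_filter s_monic s_irr (mem_nth 0 ir).
have E_neq0 : E i.+1 != 0.
  rewrite EspaceE kermxpoly_neq0 //; first by case: p_irr.
  by rewrite s_prod dvdp_prod_mem.
suff : \rank (E i.+1) != 1%N by rewrite -mxrank_eq0 in E_neq0; lia.
apply/eqP => rank1; set u := nz_row (E i.+1).
have uE : (u <= E i.+1)%MS := nz_row_sub _.
have rank_u : \rank u = 1%N.
  by apply/eqP; rewrite eqn_leq rank_leq_row lt0n mxrank_eq0 nz_row_eq0 E_neq0.
have Eu : (E i.+1 <= u)%MS by rewrite -(mxrank_leqif_sup uE).2 rank1 rank_u.
have uQ : u *m Q = 0.
  apply: (ricci_eq0 HG HK HQ); apply: (curvature_Espace_row ir uE) => v.
  move/submx_trans/(_ Eu)/submxP => [d ->].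
  by rewrite [d]mx11_scalar mul_scalar_mx (curvatureZr HK) (curvature_alternate HK) scaler0.
have : (u <= kermxpoly Q (nth 0 Ps i) :&: kermxpoly Q 'X)%MS.
  by rewrite sub_capmx kermxpolyX; apply/andP; split; [exact: uE | apply/sub_kermxP].
by rewrite mxdirect_kermxpoly // submx0 nz_row_eq0 (negPf E_neq0).
Qed.

Lemma hspan_Espace_sum A : hspan K (fun _ => True) A <->
  exists B : 'I_r.+1 -> M,
    (forall i : 'I_r.+1, hspan K (fun x => (x <= E i)%MS) (B i)) /\ A = \sum_(i < r.+1) B i.
Proof.
split=> [[m [c [B [KB ->]]]]|[B [EB ->]]]; last first.
  by apply: in_span_sum => i _; apply: in_span_sub (EB i) => _ [x [y [_ [_ ->]]]]; exists x, y.
have split_k k : exists fg : ('I_r.+1 -> V) * ('I_r.+1 -> V), [/\ forall i, (fg.1 i <= E i)%MS,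
    forall i, (fg.2 i <= E i)%MS & B k = \sum_i K (fg.1 i) (fg.2 i)].
  have [x [y [_ [_ ->]]]] := KB k.
  by have [f [g fgP]] := curvature_Espace_split x y; exists (f, g).
have [fg fgP] := fin_all_exists split_k.
exists (fun i => \sum_(k < m) c k *: K ((fg k).1 i) ((fg k).2 i)); split.
  move=> i; exists m, c, (fun k => K ((fg k).1 i) ((fg k).2 i)); split=> // k.
  by have [fE gE _] := fgP k; exists ((fg k).1 i), ((fg k).2 i).
rewrite exchange_big; apply: eq_bigr => k _; rewrite -scaler_sumr.
by have [_ _ <-] := fgP k.
Qed.

Lemma lie_closed_hspan_Espace i : lie_closed (hspan K (fun x => (x <= E i)%MS)).
Proof.
apply: lie_closed_span => _ _ [x [y [xE [yE ->]]]] [a [b [aE [bE ->]]]].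
rewrite HS; apply: in_spanD; apply: in_span_mem.
  by exists (x *m K a b), y; split=> //; apply: Espace_stable.
by exists x, (y *m K a b); split=> //; split=> //; apply: Espace_stable.
Qed.

End Decomposition.

Unset Implicit Arguments.

Theorem mainTheorem2 (R : realType) (n : nat) (G : 'M[R]_n.+1)
  (K : 'rV[R]_n.+1 -> 'rV[R]_n.+1 -> 'M[R]_n.+1) (Ric : 'M[R]_n.+1) :
  pseudo_euclidean G -> curvature_tensor G K -> semi_symmetric K ->
  is_ricci G K Ric ->
  exists s : seq {poly R},
    (* (1) *)
    [/\ mxminpoly Ric = \prod_(p <- s) p,
        all (fun p => p \is monic) s,
        (forall i j, (i < size s)%N -> (j < size s)%N -> i <> j ->
           coprimep (nth 0 s i) (nth 0 s j)) &
        (forall p, p \in s -> irreducible_poly p \/ p = 'X^2)] /\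
    let Ps := [seq p <- s | (p != 'X) && (p != 'X^2)] in
    let r := size Ps in
    let E := Espace Ric Ps in
    [/\ (* (2) orthogonal direct sum *)
        (\sum_(i < r.+1) E i :=: 1%:M)%MS /\ mxdirect (\sum_(i < r.+1) E i)
        /\ (forall (i j : nat) (u v : 'rV[R]_n.+1), (i <= r)%N -> (j <= r)%N -> i <> j ->
              (u <= E i)%MS -> (v <= E j)%MS -> ip G u v = 0),
        (* (3) *)
        (forall (i : nat) (u v w : 'rV[R]_n.+1), (i <= r)%N ->
           (w <= E i)%MS -> (w *m K u v <= E i)%MS),
        (* (4) *)
        (forall (i j : nat) (u v : 'rV[R]_n.+1), (i <= r)%N -> (j <= r)%N -> i <> j ->
           (u <= E i)%MS -> (v <= E j)%MS -> K u v = 0),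
        (* (5) *)
        (forall i : nat, (1 <= i <= r)%N -> (2 <= \rank (E i))%N) &
        (* (6) *)
        (forall A : 'M[R]_n.+1,
           hspan K (fun _ => True) A <->
           exists B : 'I_r.+1 -> 'M[R]_n.+1,
             (forall i : 'I_r.+1, hspan K (fun x => (x <= E i)%MS) (B i)) /\
             A = \sum_(i < r.+1) B i)
        /\ (forall i : nat, (i <= r)%N -> lie_closed (hspan K (fun x => (x <= E i)%MS)))].
Proof.
move=> HG HK HS HQ.
have [s [s_prod s_monic s_coprime s_irr]] := almost_squarefree_factorization
  (mxminpoly_monic Ric) (almost_squarefree_ricci HG HK HS HQ).
exists s; split; first by split=> //; apply: pairwise_coprimep_nth.
cbv zeta; split.
- split; first exact: (Espace_sum HG HK HS HQ s_prod s_monic s_coprime s_irr).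
  split; first exact: (Espace_direct _ s_monic s_coprime s_irr).
  by move=> i j u v; apply: (Espace_orthogonal HG HK HQ s_monic s_coprime s_irr).
- by move=> i u v w _; apply: (Espace_stable HG HK HS HQ).
- by move=> i j u v; apply: (curvature_Espace HG HK HS HQ s_monic s_coprime s_irr).
- exact: (rank_Espace HG HK HS HQ s_prod s_monic s_coprime s_irr).
split; first exact: (hspan_Espace_sum HG HK HS HQ s_prod s_monic s_coprime s_irr).
by move=> i _; apply: (lie_closed_hspan_Espace HG HK HS HQ).
Qed.
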